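(* ($q$-Genocchi triangle) Let $q$ be a nonzero real number with $q\neq-1$. Define numbers $b(m,k)=b(m,k,q)$ as follows: $b(0,1)=1$; $b(2n+1,0)=0$ for all $n\ge0$; $b(2n,n+1)=0$ for all $n\ge1$; for $n\ge0$ and $1\le k\le n+1$, $$b(2n+1,k)=q^{2k-2}b(2n+1,k-1)+(1+q^{2k-1})b(2n,k);$$ and for $n\ge1$ and $1\le k\le n$, $$b(2n,k)=q^{1-2k}\big(b(2n,k+1)+(1+q^{2k})b(2n-1,k)\big).$$ (In particular $b(1,1)=1+q$.) Then for every $n\ge1$, $$b(2n-1,n)=\lambda\big((-1)^{n-1}U_{2n-1}(1,s,q)\big)=(-q;q)_{2n-1}\,G_{2n}(q).$$
   Context: $U_{-1}=0$, $U_0=1$, $U_n(x,s,q)=(1+q^{n})x\,U_{n-1}(x,s,q)+q^{n-1}s\,U_{n-2}(x,s,q)$ for $n\ge1$. Since $U_{2n}(1,s,q)$ is a polynomial in $s$ of degree $n$, the polynomials $U_{2n}(1,s,q)$, $n\ge0$, form a basis of the polynomials in $s$; $\lambda$ is the linear functional on polynomials in $s$ with $\lambda(U_{2n}(1,s,q))=[n=0]$. Notation: $[m]=1+q+\cdots+q^{m-1}$, $[m]!=[1]\cdots[m]$; $(-q;q)_m=(1+q)(1+q^2)\cdots(1+q^m)$. With $e(z)=\sum_{m\ge0}z^m/[m]!$, the $q$-Genocchi numbers $G_{2m}(q)$, $m\ge1$, are defined by $z\frac{e(z)-e(-z)}{e(z)+e(-z)}=\sum_{m\ge1}\frac{(-1)^{m-1}G_{2m}(q)(-q;q)_{2m-1}}{[2m]!}z^{2m}$.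 *)

From HB Require Import structures.
From mathcomp Require Import all_boot all_order all_algebra.
Set Implicit Arguments. Unset Strict Implicit. Unset Printing Implicit Defensive.
Import Order.TTheory GRing.Theory Num.Theory.
Local Open Scope ring_scope.

(* Formal power series in z are coefficient sequences nat -> R;
   polynomials in s are {poly R} (s = 'X). *)

Definition qint (R : nzRingType) (q : R) (m : nat) : R := \sum_(i < m) q ^+ i.
Definition qfact (R : nzRingType) (q : R) (m : nat) : R :=
  \prod_(1 <= i < m.+1) qint q i.
Definition qpochneg (R : nzRingType) (q : R) (m : nat) : R :=
  \prod_(1 <= i < m.+1) (1 + q ^+ i).

(* coefficients of e(z) + e(-z), where e(z) = sum_m z^m/[m]! *)
Definition genD (R : fieldType) (q : R) (n : nat) : R :=
  (1 + (-1) ^+ n) / qfact q n.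
(* coefficients of z (e(z) - e(-z)) *)
Definition genN (R : fieldType) (q : R) (n : nat) : R :=
  match n with
  | 0 => 0
  | n'.+1 => (1 - (-1) ^+ n') / qfact q n'
  end.

(* formal power series division N/D (D 0 invertible): the first n
   coefficients of the quotient F, determined by F * D = N *)
Fixpoint fps_div_seq (R : fieldType) (N D : nat -> R) (n : nat) : seq R :=
  match n with
  | 0 => [::]
  | n'.+1 =>
      let s := fps_div_seq N D n' in
      rcons s ((N n' - \sum_(i < n') s`_i * D (n' - i)%N) / D 0%N)
  end.
Definition fps_div (R : fieldType) (N D : nat -> R) (n : nat) : R :=
  (fps_div_seq N D n.+1)`_n.

(* q-Genocchi number G_{2m}(q): the coefficient of z^{2m} in
   z (e(z)-e(-z))/(e(z)+e(-z)) equals (-1)^(m-1) G_{2m} (-q;q)_{2m-1} / [2m]! *)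
Definition qGenocchi (R : fieldType) (q : R) (m : nat) : R :=
  (-1) ^+ (m.-1) * fps_div (genN q) (genD q) (2 * m) * qfact q (2 * m)
  / qpochneg q (2 * m).-1.

(* (U_{n-1}, U_n) as polynomials in s, for fixed x, q *)
Fixpoint Upair (R : nzRingType) (x q : R) (n : nat) : {poly R} * {poly R} :=
  match n with
  | 0 => (0, 1)
  | n'.+1 =>
      let: (a, b) := Upair x q n' in
      (b, ((1 + q ^+ n'.+1) * x)%:P * b + (q ^+ n')%:P * 'X * a)
  end.
Definition U (R : nzRingType) (x q : R) (n : nat) : {poly R} := (Upair x q n).2.

Definition lambda_spec (R : nzRingType) (q : R) (L : {poly R} -> R) : Prop :=
  (forall (a : R) (p r : {poly R}), L (a *: p + r) = a * L p + L r) /\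
  (forall n : nat, L (U 1 q (2 * n)) = (n == 0%N)%:R).

From HB Require Import structures.
From mathcomp Require Import all_boot all_order all_algebra.
From mathcomp Require Import ring zify.
Import Order.TTheory GRing.Theory Num.Theory.
Set Implicit Arguments.
Unset Strict Implicit.
Unset Printing Implicit Defensive.
Local Open Scope ring_scope.

(* U_(n-1)(1,s,q) = sum_k [n,k] q^C(n-k,2) theta_k, where theta_(2j) = 0 and theta_(2j+1)
   is the product of the (1 + q^(2i+1) s) for i < j; by q-binomial inversion,
   sum_k (-1)^k [2m,k] U_(k-1) = 0.  As lambda kills U_(2i) for i > 0, applying lambda
   gives a convolution identity showing that the lambda(U_(n-1))/[n]!, n even, are the
   coefficients of z (e(z) - e(-z))/(e(z) + e(-z)): this is the Genocchi equality.
   The numbers (-1)^n lambda(s^(n+1-k) U_(2k-1)) and (-1)^n lambda(s^(n+1-k) U_(2k-2))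
   obey the recurrences of b(2n+1,k) and b(2n,k) because of the recurrence of U, and
   these recurrences determine the triangle.  Finally lambda exists: U_(2n) has degree
   exactly n when q != 0, so the moments lambda(s^i) solve a triangular system. *)

Lemma binS2 m : 'C(m.+1, 2) = ('C(m, 2) + m)%N.
Proof. by rewrite binS bin1. Qed.

Lemma big_ord_widen0 (V : nmodType) n N (F : nat -> V) : (n <= N)%N ->
  (forall i, (n <= i < N)%N -> F i = 0) -> \sum_(i < n) F i = \sum_(i < N) F i.
Proof.
move=> le_nN F0; rewrite (big_ord_widen N F le_nN) big_mkcond /=.
apply: eq_bigr => i _; case: ltnP => // le_ni.
by rewrite F0 // le_ni ltn_ord.
Qed.

Section TriangularSystem.
Variables (F : fieldType) (A : nat -> nat -> F) (r : nat -> F).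

Fixpoint trisolve_seq (n : nat) : seq F :=
  if n is n'.+1 then
    let s := trisolve_seq n' in
    rcons s ((r n' - \sum_(i < n') s`_i * A n' i) / A n' n')
  else [::].

Definition trisolve (n : nat) : F := (trisolve_seq n.+1)`_n.

Lemma size_trisolve_seq n : size (trisolve_seq n) = n.
Proof. by elim: n => //= n IHn; rewrite size_rcons IHn. Qed.

Lemma nth_trisolve_seq n i : (i < n)%N -> (trisolve_seq n)`_i = trisolve i.
Proof.
elim: n => // n IHn; rewrite ltnS leq_eqVlt => /predU1P [-> // | lt_in].
by rewrite /= nth_rcons size_trisolve_seq lt_in IHn.
Qed.

Lemma trisolveE n : trisolve n = (r n - \sum_(i < n) trisolve i * A n i) / A n n.
Proof.
rewrite {1}/trisolve /= nth_rcons size_trisolve_seq ltnn eqxx.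
by under eq_bigr => i _ do rewrite (nth_trisolve_seq (ltn_ord i)).
Qed.

Lemma trisolveP n : A n n != 0 -> \sum_(i < n.+1) trisolve i * A n i = r n.
Proof. by move=> Ann; rewrite big_ord_recr /= [trisolve n]trisolveE divfK // addrC subrK. Qed.

Lemma trisolve_unique (x : nat -> F) : (forall n, A n n != 0) ->
  (forall n, \sum_(i < n.+1) x i * A n i = r n) -> forall n, x n = trisolve n.
Proof.
move=> Ann xP; elim/ltn_ind => n IHn; rewrite trisolveE -(xP n) big_ord_recr /=.
rewrite [X in _ - X](eq_bigr (fun i : 'I_n => x i * A n i)) => [|i _]; last by rewrite IHn.
by rewrite addrAC subrr add0r mulfK.
Qed.

End TriangularSystem.

Lemma fps_div_trisolve (F : fieldType) (N D : nat -> F) :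
  fps_div N D =1 trisolve (fun n i => D (n - i)%N) N.
Proof.
have seqE n : fps_div_seq N D n = trisolve_seq (fun n i => D (n - i)%N) N n.
  by elim: n => //= n ->; rewrite subnn.
by move=> n; rewrite /fps_div seqE.
Qed.

Definition genocchi_triangle (R : unitRingType) (q : R) (b : nat -> nat -> R) : Prop :=
  [/\ b 0%N 1%N = 1,
      forall n : nat, b (2 * n).+1 0%N = 0,
      forall n : nat, (1 <= n)%N -> b (2 * n)%N n.+1 = 0,
      forall n k : nat, (1 <= k <= n.+1)%N ->
        b (2 * n).+1 k = q ^+ (2 * k - 2) * b (2 * n).+1 k.-1
                         + (1 + q ^+ (2 * k - 1)) * b (2 * n)%N k
    & forall n k : nat, (1 <= n)%N -> (1 <= k <= n)%N ->
        b (2 * n)%N k = q ^ (1 - (2 * k)%N%:Z)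
                        * (b (2 * n)%N k.+1 + (1 + q ^+ (2 * k)) * b (2 * n).-1 k)].

Section TriangleUniqueness.
Variables (R : unitRingType) (q : R) (b c : nat -> nat -> R).
Hypotheses (hb : genocchi_triangle q b) (hc : genocchi_triangle q c).

(* Odd rows are filled from left to right, even rows from right to left. *)
Lemma odd_row_eq n : (forall k, (1 <= k <= n.+1)%N -> b (2 * n)%N k = c (2 * n)%N k) ->
  forall k, (k <= n.+1)%N -> b (2 * n).+1 k = c (2 * n).+1 k.
Proof.
case: hb hc => _ b0 _ b_odd _ [_ c0 _ c_odd _] even_eq.
elim=> [|k IHk] le_kn; first by rewrite b0 c0.
by rewrite (b_odd n k.+1) ?(c_odd n k.+1) //= IHk ?even_eq // ltnW.
Qed.

Lemma even_row_eq n : (forall k, (k <= n.+1)%N -> b (2 * n).+1 k = c (2 * n).+1 k) ->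
  forall k, (1 <= k <= n.+2)%N -> b (2 * n.+1)%N k = c (2 * n.+1)%N k.
Proof.
case: hb hc => _ _ b_top _ b_even [_ _ c_top _ c_even] odd_eq.
suff eq_from_top d : (d <= n.+1)%N -> b (2 * n.+1)%N (n.+2 - d) = c (2 * n.+1)%N (n.+2 - d).
  move=> k le_k; have -> : k = (n.+2 - (n.+2 - k))%N by lia.
  by apply: eq_from_top; lia.
elim: d => [|d IHd] le_d; first by rewrite subn0 (b_top n.+1) ?(c_top n.+1).
have -> : (n.+2 - d.+1 = n.+1 - d)%N by lia.
rewrite (b_even n.+1 (n.+1 - d)%N) ?(c_even n.+1 (n.+1 - d)%N) //; try lia.
have -> : ((n.+1 - d).+1 = n.+2 - d)%N by lia.
have -> : ((2 * n.+1).-1 = (2 * n).+1)%N by lia.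
by rewrite IHd ?odd_eq //; lia.
Qed.

Lemma genocchi_triangle_unique n k : (k <= n.+1)%N -> b (2 * n).+1 k = c (2 * n).+1 k.
Proof.
move: k; apply: odd_row_eq; elim: n => [|n IHn] k le_k.
  have -> : k = 1%N by lia.
  by case: hb hc => b01 _ _ _ _ [c01 _ _ _ _]; rewrite muln0 b01 c01.
by have := even_row_eq (odd_row_eq IHn); apply.
Qed.

End TriangleUniqueness.

Section QGenocchi.
Variables (R : realFieldType) (q : R).
Hypothesis qN1 : q != -1.

Lemma qint0 : qint q 0 = 0.
Proof. by rewrite /qint big_ord0. Qed.

Lemma qintS n : qint q n.+1 = qint q n + q ^+ n.
Proof. by rewrite /qint big_ord_recr. Qed.

Lemma qint1 : qint q 1 = 1.
Proof. by rewrite qintS qint0 add0r. Qed.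

Lemma qintD m n : qint q (m + n) = qint q m + q ^+ m * qint q n.
Proof.
elim: n => [|n IHn]; first by rewrite addn0 qint0 mulr0 addr0.
by rewrite addnS !qintS IHn exprD mulrDr addrA.
Qed.

Lemma qint_neq0 n : (0 < n)%N -> qint q n != 0.
Proof.
move=> n_gt0; apply/eqP => qn0.
have qn1 : q ^+ n = 1.
  have e : (1 - q) * qint q n = 1 - q ^+ n.
    elim: (n) => [|m IHm]; first by rewrite qint0 mulr0 expr0 subrr.
    by rewrite qintS mulrDr IHm exprS; ring.
  by apply/eqP; rewrite -subr_eq0 -opprB -e qn0 mulr0 oppr0.
have /eqP : `|q| = 1 by apply/eqP; rewrite -(pexpr_eq1 n_gt0) // -normrX qn1 normr1.
rewrite eqr_norml ler01 andbT (negbTE qN1) orbF => /eqP q1.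
move: qn0; rewrite /qint q1 (eq_bigr (fun=> 1)) => [|i _]; last by rewrite expr1n.
by rewrite sumr_const card_ord => /eqP; rewrite pnatr_eq0 => /eqP; lia.
Qed.

Lemma qfact0 : qfact q 0 = 1.
Proof. by rewrite /qfact big_geq. Qed.

Lemma qfactS n : qfact q n.+1 = qfact q n * qint q n.+1.
Proof. by rewrite /qfact big_nat_recr. Qed.

Lemma qfact_neq0 n : qfact q n != 0.
Proof.
elim: n => [|n IHn]; first by rewrite qfact0 oner_eq0.
by rewrite qfactS mulf_neq0 // qint_neq0.
Qed.

Lemma qpochneg_neq0 n : qpochneg q n != 0.
Proof.
(* [2 i] = (1 + q^i) [i] *)
rewrite /qpochneg prodf_seq_neq0; apply/allP => i; rewrite mem_index_iota => /andP [i_gt0 _].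
have : qint q (i + i) != 0 by rewrite qint_neq0 // addn_gt0 i_gt0.
by rewrite qintD -{1}[qint q i]mul1r -mulrDl mulf_eq0 negb_or => /andP [].
Qed.

Definition qbin (n k : nat) : R :=
  if (k <= n)%N then qfact q n / (qfact q k * qfact q (n - k)) else 0.

Lemma qbin_small n k : (n < k)%N -> qbin n k = 0.
Proof. by rewrite /qbin ltnNge => /negbTE ->. Qed.

Lemma qbinE n k : (k <= n)%N -> qbin n k = qfact q n / (qfact q k * qfact q (n - k)).
Proof. by rewrite /qbin => ->. Qed.

Lemma qbin0 n : qbin n 0 = 1.
Proof. by rewrite /qbin leq0n subn0 qfact0 mul1r divff // qfact_neq0. Qed.

Lemma qbinn n : qbin n n = 1.
Proof. by rewrite /qbin leqnn subnn qfact0 mulr1 divff // qfact_neq0. Qed.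

Lemma qbin1 n : qbin n 1 = qint q n.
Proof.
case: n => [|n]; first by rewrite qbin_small // qint0.
rewrite qbinE // subn1 qfactS (qfactS 0) qfact0 qint1 !mul1r.
by rewrite mulrAC divff ?mul1r // qfact_neq0.
Qed.

Lemma qbinS n k : qbin n.+1 k.+1 = qbin n k + q ^+ k.+1 * qbin n k.+1.
Proof.
have [n_lt_k | k_lt_n | ->] := ltngtP n k; first by rewrite !qbin_small ?mulr0 ?addr0 //; lia.
  2: by rewrite !qbinn qbin_small // mulr0 addr0.
have [d ->] : exists d, n = (k.+1 + d)%N by exists (n - k.+1)%N; lia.
rewrite !qbinE; try lia.
have -> : ((k.+1 + d).+1 - k.+1 = d.+1)%N by lia.
have -> : (k.+1 + d - k = d.+1)%N by lia.
have e : qint q (k.+1 + d).+1 = qint q k.+1 + q ^+ k.+1 * qint q d.+1 by rewrite -qintD addnS.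
rewrite addKn qfactS e !qfactS; field.
by rewrite !qfact_neq0 !qint_neq0.
Qed.

Lemma qbinS' n k : qbin n.+1 k.+1 = q ^+ (n - k) * qbin n k + qbin n k.+1.
Proof.
have [n_lt_k | k_lt_n | ->] := ltngtP n k; first by rewrite !qbin_small ?mulr0 ?addr0 //; lia.
  2: by rewrite subnn !qbinn qbin_small // mulr1 addr0.
have [d ->] : exists d, n = (k.+1 + d)%N by exists (n - k.+1)%N; lia.
rewrite !qbinE; try lia.
have -> : ((k.+1 + d).+1 - k.+1 = d.+1)%N by lia.
have -> : (k.+1 + d - k = d.+1)%N by lia.
have e : qint q (k.+1 + d).+1 = qint q d.+1 + q ^+ d.+1 * qint q k.+1.
  by rewrite -qintD; congr qint; lia.
rewrite addKn qfactS e !qfactS; field.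
by rewrite !qfact_neq0 !qint_neq0.
Qed.

Lemma qbin_mul n k i : (i <= k <= n)%N ->
  qbin n k * qbin k i = qbin n i * qbin (n - i) (k - i).
Proof.
case/andP => i_le_k k_le_n.
have [a ek] : exists a, k = (i + a)%N by exists (k - i)%N; lia.
have [d en] : exists d, n = (i + a + d)%N by exists (n - k)%N; lia.
subst k n.
rewrite !qbinE; try lia.
have -> : (i + a + d - (i + a) = d)%N by lia.
have -> : (i + a + d - i - (i + a - i) = d)%N by lia.
rewrite !addKn -addnA addKn.
by field; rewrite !qfact_neq0.
Qed.

(* Telescoping with the first q-Pascal rule: the q-binomial theorem at x = -1. *)
Lemma sum_qbin_alt n :
  \sum_(l < n.+2) (-1) ^+ l * qbin n.+1 l * q ^+ 'C(l, 2) = 0.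
Proof.
pose A l := (-1) ^+ l * qbin n l * q ^+ 'C(l.+1, 2).
rewrite big_ord_recl /= qbin0 !mul1r.
rewrite (eq_bigr (fun l : 'I_n.+1 => A l.+1 - A l)) => [|l _]; last first.
  rewrite /bump /= add1n qbinS /A !binS2 !exprD !exprS.
  by move: (q ^+ 'C(l, 2)) (q ^+ l) => Z X; ring.
rewrite -(big_mkord xpredT (fun l => A l.+1 - A l)) telescope_sumr //.
by rewrite /A qbin_small // qbin0 mulr0 mul0r sub0r expr0 !mul1r bin0n addrN.
Qed.

Fixpoint theta (k : nat) : {poly R} :=
  match k with
  | 0 => 0
  | 1 => 1
  | k'.+2 => (1 + q ^+ k' *: 'X) * theta k'
  end.

Lemma theta_double i : theta i.*2 = 0.
Proof. by elim: i => //= i ->; rewrite mulr0. Qed.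

Definition ucoef (m k : nat) : R := qbin m k * q ^+ 'C(m - k, 2).

(* [Uprev m] is U_(m-1)(1,s,q); the index shift makes [Uprev 0] the value U_(-1) = 0. *)
Definition Uprev (m : nat) : {poly R} := \sum_(k < m.+1) ucoef m k *: theta k.

Lemma ucoef_small m k : (m < k)%N -> ucoef m k = 0.
Proof. by move=> ?; rewrite /ucoef qbin_small ?mul0r. Qed.

Lemma ucoefSS m k :
  ucoef m.+2 k = (1 + q ^+ m.+1) * ucoef m.+1 k
    + (if k is j.+2 then qbin m j * q ^+ 'C(m.+1 - j, 2) else 0)
    - qbin m k * q ^+ 'C(m.+1 - k, 2).
Proof.
rewrite /ucoef; case: k => [|[|j]] /=.
- by rewrite !qbin0 !subn0 !binS2 !exprD; ring.
- by rewrite qbinS (qbinS' m 0) !qbin0 !subSS !subn0 !binS2 !exprD !exprS; ring.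
have [m_lt_j | le_jm] := ltnP m j.
  by rewrite !qbin_small ?mul0r ?mulr0 ?subr0 ?addr0 //; lia.
have [[|a] ->{m le_jm}] : exists a, m = (j + a)%N by exists (m - j)%N; lia.
  rewrite addn0 !qbinn !qbin_small // !subSS subnn subSn // subnn !(@bin_small _ 2); try lia.
  by ring.
rewrite qbinS !qbinS'.
have -> : ((j + a.+1).+2 - j.+2 = a.+1)%N by lia.
have -> : ((j + a.+1).+1 - j.+2 = a)%N by lia.
have -> : ((j + a.+1).+1 - j = a.+2)%N by lia.
have -> : (j + a.+1 - j = a.+1)%N by lia.
have -> : (j + a.+1 - j.+1 = a)%N by lia.
rewrite !binS2 !exprS !exprD !exprS; ring.
Qed.

Lemma Uprev_widen m N : (m < N)%N -> Uprev m = \sum_(k < N) ucoef m k *: theta k.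
Proof.
move=> lt_mN; apply: (@big_ord_widen0 _ _ _ (fun k => ucoef m k *: theta k)) => // k.
by case/andP=> lt_mk _; rewrite ucoef_small ?scale0r.
Qed.

Lemma scale_X_Uprev m : q ^+ m *: ('X * Uprev m)
  = \sum_(k < m.+1) (qbin m k * q ^+ 'C(m.+1 - k, 2)) *: (theta k.+2 - theta k).
Proof.
rewrite /Uprev mulr_sumr scaler_sumr; apply: eq_bigr => -[k /= le_km] _.
rewrite mulrDl mul1r addrC addKr -scalerAl -scalerAr !scalerA /ucoef subSn // binS2 exprD.
by rewrite -{1}(subnK (le_km : (k <= m)%N)) exprD; congr (_ *: _); ring.
Qed.

Lemma UprevSS m : Uprev m.+2 = (1 + q ^+ m.+1) *: Uprev m.+1 + q ^+ m *: ('X * Uprev m).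
Proof.
pose c k := qbin m k * q ^+ 'C(m.+1 - k, 2).
have c_small k : (m < k)%N -> c k = 0 by move=> ?; rewrite /c qbin_small ?mul0r.
rewrite {1}/Uprev scale_X_Uprev (Uprev_widen (ltnW (ltnSn m.+2))) scaler_sumr.
under eq_bigr do rewrite ucoefSS scalerBl scalerDl -scalerA.
rewrite sumrB big_split -addrA; congr (_ + _).
under [in RHS]eq_bigr do rewrite scalerBr.
rewrite sumrB; congr (_ - _).
  by rewrite 2!big_ord_recl /= !scale0r !add0r.
symmetry; apply: (@big_ord_widen0 _ _ _ (fun k => c k *: theta k)) => [|k]; first lia.
by case/andP=> lt_mk _; rewrite c_small ?scale0r.
Qed.

Lemma Uprev0 : Uprev 0 = 0.
Proof. by rewrite /Uprev big_ord1 scaler0. Qed.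

Lemma Uprev1 : Uprev 1 = 1.
Proof.
by rewrite /Uprev big_ord_recr big_ord1 /= scaler0 add0r /ucoef qbinn subnn mulr1 scale1r.
Qed.

Lemma Upair_Uprev n : Upair 1 q n = (Uprev n, Uprev n.+1).
Proof.
elim: n => [|n /= ->]; first by rewrite Uprev0 Uprev1.
by rewrite UprevSS mulr1 -mulrA !mul_polyC.
Qed.

Lemma U_Uprev n : U 1 q n = Uprev n.+1.
Proof. by rewrite /U Upair_Uprev. Qed.

(* q-binomial inversion: the triangular matrix [ucoef] is inverted by [(-1)^k qbin n k]. *)
Lemma sum_qbin_ucoef_alt n i : (i <= n)%N ->
  \sum_(k < n.+1) (-1) ^+ k * qbin n k * ucoef k i = (i == n)%:R * (-1) ^+ n.
Proof.
move=> le_in; have [d ->{n le_in}] : exists d, n = (i + d)%N by exists (n - i)%N; lia.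
rewrite -addnS big_split_ord /= big1 ?add0r => [|k _]; last first.
  by rewrite ucoef_small ?mulr0.
rewrite (eq_bigr (fun l : 'I_d.+1 => (-1) ^+ i * qbin (i + d) i
    * ((-1) ^+ l * qbin d l * q ^+ 'C(l, 2)))) => [|l _]; last first.
  have le_ld : (l <= d)%N by rewrite -ltnS.
  rewrite /ucoef /= addKn -mulrA (mulrA (qbin _ _)) qbin_mul ?leq_addr ?leq_add2l //.
  by rewrite !addKn exprD; ring.
rewrite -mulr_sumr; case: d => [|d].
  by rewrite big_ord1 addn0 eqxx !qbinn bin0n !expr0 !mulr1 mul1r.
rewrite sum_qbin_alt mulr0 (_ : (i == i + d.+1)%N = false) ?mul0r //.
by apply/negbTE; rewrite -{1}[i]addn0 eqn_add2l.
Qed.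

Lemma sum_qbin_Uprev_alt n :
  \sum_(k < n.+1) ((-1) ^+ k * qbin n k) *: Uprev k = (-1) ^+ n *: theta n.
Proof.
under eq_bigr => k _ do rewrite (Uprev_widen (ltn_ord k)) scaler_sumr.
rewrite exchange_big /= big_ord_recr /= big1 ?add0r => [|i _].
  under eq_bigr do rewrite scalerA.
  by rewrite -scaler_suml sum_qbin_ucoef_alt // eqxx mul1r.
under eq_bigr do rewrite scalerA.
rewrite -scaler_suml sum_qbin_ucoef_alt 1?ltnW //.
by rewrite (_ : (i == n :> nat) = false) ?mul0r ?scale0r // ltn_eqF.
Qed.

Hypothesis q0 : q != 0.

Lemma size_Uprev n : (size (Uprev n.*2) <= n)%N /\ size (Uprev n.*2.+1) = n.+1.
Proof.
have size_XM (p : {poly R}) : (size ('X * p)%R <= (size p).+1)%N.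
  by apply: leq_trans (size_polyMleq _ _) _; rewrite size_polyX.
elim: n => [|n [size_even size_odd]]; first by rewrite Uprev0 Uprev1 size_poly0 size_poly1.
have size_even' : (size (Uprev n.+1.*2) <= n.+1)%N.
  rewrite doubleS UprevSS (leq_trans (size_polyD _ _)) // geq_max.
  rewrite (leq_trans (size_scale_leq _ _)) ?size_odd //=.
  by rewrite (leq_trans (size_scale_leq _ _)) // (leq_trans (size_XM _)).
have size_X_odd : size (q ^+ n.*2.+1 *: ('X * Uprev n.*2.+1)) = n.+2.
  by rewrite size_scale ?expf_neq0 // mulrC size_mulX -?size_poly_gt0 size_odd.
split=> //; rewrite doubleS UprevSS addrC size_polyDl size_X_odd //.
by rewrite ltnS (leq_trans (size_scale_leq _ _)).
Qed.

Lemma lead_Uprev_odd_neq0 n : (Uprev n.*2.+1)`_n != 0.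
Proof.
have size_odd := (size_Uprev n).2.
by rewrite -[n in _`_n]/(n.+1.-1) -size_odd -lead_coefE lead_coef_eq0 -size_poly_eq0 size_odd.
Qed.

(* The moments L(s^i), determined by the triangular system L(U_2n) = [n = 0]. *)
Definition lambda_moment : nat -> R :=
  trisolve (fun n i => (Uprev n.*2.+1)`_i) (fun n => (n == 0)%:R).

Definition lambda_fun (p : {poly R}) : R := \sum_(i < size p) lambda_moment i * p`_i.

Lemma lambda_funE (p : {poly R}) N :
  (size p <= N)%N -> lambda_fun p = \sum_(i < N) lambda_moment i * p`_i.
Proof.
move=> le_pN; apply: (@big_ord_widen0 _ _ _ (fun i => lambda_moment i * p`_i)) => // i.
by case/andP=> le_pi _; rewrite nth_default ?mulr0.
Qed.

Lemma lambda_fun_spec : lambda_spec q lambda_fun.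
Proof.
split=> [a p r | n].
  pose N := maxn (size p) (size r).
  rewrite !(@lambda_funE _ N) ?leq_maxl ?leq_maxr //; last first.
    rewrite (leq_trans (size_polyD _ _)) // geq_max leq_maxr andbT.
    by rewrite (leq_trans (size_scale_leq _ _)) ?leq_maxl.
  by rewrite mulr_sumr -big_split /=; apply: eq_bigr => i _; rewrite coefD coefZ; ring.
rewrite U_Uprev mul2n /lambda_fun (size_Uprev n).2.
by apply: trisolveP; exact: lead_Uprev_odd_neq0.
Qed.

Lemma genD_even k : ~~ odd k -> genD q k = 2 / qfact q k.
Proof. by rewrite /genD -signr_odd => /negbTE ->; rewrite expr0. Qed.

Lemma genD_odd k : odd k -> genD q k = 0.
Proof. by rewrite /genD -signr_odd => ->; rewrite expr1 addrN mul0r. Qed.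

Section Lambda.
Variable L : {poly R} -> R.
Hypothesis hL : lambda_spec q L.

Lemma lambdaD p r : L (p + r) = L p + L r.
Proof. by have := hL.1 1 p r; rewrite scale1r mul1r. Qed.

Lemma lambda0 : L 0 = 0.
Proof. by apply: (addIr (L 0)); rewrite -lambdaD addr0 add0r. Qed.

Lemma lambdaZ a p : L (a *: p) = a * L p.
Proof. by have := hL.1 a p 0; rewrite !addr0 lambda0 addr0. Qed.

Lemma lambda_sum (I : Type) (s : seq I) (P : pred I) (F : I -> {poly R}) :
  L (\sum_(i <- s | P i) F i) = \sum_(i <- s | P i) L (F i).
Proof. exact: (big_morph L lambdaD lambda0). Qed.

Lemma lambda_Uprev_odd i : L (Uprev i.*2.+1) = (i == 0)%:R.
Proof. by rewrite -U_Uprev -mul2n hL.2. Qed.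

Lemma sum_qbin_lambda_Uprev_alt m :
  \sum_(k < m.*2.+1) (-1) ^+ k * qbin m.*2 k * L (Uprev k) = 0.
Proof.
have := congr1 L (sum_qbin_Uprev_alt m.*2).
by rewrite theta_double scaler0 lambda0 lambda_sum; under eq_bigr do rewrite lambdaZ.
Qed.

(* Only the term k = 1 survives among the odd k, since L (U_2i) = [i = 0]. *)
Lemma sum_qbin_lambda_Uprev_even m : (0 < m)%N ->
  \sum_(k < m.*2.+1) (if odd k then 0 else qbin m.*2 k * L (Uprev k)) = qint q m.*2.
Proof.
move=> m_gt0; have := sum_qbin_lambda_Uprev_alt m.
rewrite (eq_bigr (fun k : 'I_m.*2.+1 =>
    (if odd k then 0 else qbin m.*2 k * L (Uprev k))
  - (if odd k then qbin m.*2 k * (k == 1 :> nat)%:R else 0))) => [|k _]; last first.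
  rewrite -signr_odd; case: ifPn => [odd_k | _]; last by rewrite expr0 mul1r subr0.
  have [i ->] : exists i, k = i.*2.+1 :> nat.
    by exists k./2; rewrite -[LHS]odd_double_half odd_k.
  by rewrite lambda_Uprev_odd eqSS double_eq0 expr1 mulN1r -mulNr add0r.
move/eqP; rewrite sumrB subr_eq0 => /eqP ->.
have lt_1m : (1 < m.*2.+1)%N by rewrite ltnS -addnn addn_gt0 m_gt0.
rewrite (bigD1 (Ordinal lt_1m)) //= mulr1 qbin1 big1 ?addr0 // => k neq_k1.
case: ifP => // _; rewrite (_ : (k == 1 :> nat) = false) ?mulr0 //.
by apply: contraNF neq_k1 => /eqP k1; apply/eqP/val_inj.
Qed.

(* By [fps_div_genocchi_coef], the coefficients of z (e(z) - e(-z)) / (e(z) + e(-z)). *)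
Definition genocchi_coef (n : nat) : R := if odd n then 0 else L (Uprev n) / qfact q n.

Lemma genocchi_coef_conv n :
  \sum_(i < n.+1) genocchi_coef i * genD q (n - i) = genN q n.
Proof.
have [odd_n | even_n] := boolP (odd n).
  rewrite big1 => [|i _].
    case: n odd_n => //= n; rewrite -signr_odd => /negbTE ->.
    by rewrite expr0 subrr mul0r.
  have le_in : (i <= n)%N by rewrite -ltnS.
  rewrite /genocchi_coef; have [//|even_i] := ifPn; first by rewrite mul0r.
  by rewrite genD_odd ?mulr0 // oddB // odd_n (negbTE even_i).
have [m ->{n even_n}] : exists m, n = m.*2.
  by exists n./2; rewrite -[LHS]odd_double_half (negbTE even_n).
case: m => [|m]; first by rewrite big_ord1 /genocchi_coef Uprev0 lambda0 !mul0r.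
rewrite (eq_bigr (fun i : 'I_m.+1.*2.+1 => 2 / qfact q m.+1.*2
    * (if odd i then 0 else qbin m.+1.*2 i * L (Uprev i)))) => [|i _]; last first.
  rewrite /genocchi_coef; have [_|even_i] := ifPn; first by rewrite !mul0r mulr0.
  have le_in : (i <= m.+1.*2)%N by rewrite -ltnS.
  rewrite genD_even; last by rewrite oddB // odd_double (negbTE even_i).
  rewrite qbinE //; move: (qfact_neq0 i) (qfact_neq0 (m.+1.*2 - i)) (qfact_neq0 m.+1.*2).
  by move: (qfact q i) (qfact q _) (qfact q _) => a b c a0 b0 c0; field; rewrite a0 b0 c0.
rewrite -mulr_sumr sum_qbin_lambda_Uprev_even // doubleS /genN -signr_odd /= odd_double.
rewrite qfactS expr1 opprK; move: (qfact_neq0 m.*2.+1) (@qint_neq0 m.*2.+2 isT).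
by move: (qfact q _) (qint q _) => a b a0 b0; field; rewrite a0 b0.
Qed.

Lemma fps_div_genocchi_coef : fps_div (genN q) (genD q) =1 genocchi_coef.
Proof.
move=> n; rewrite fps_div_trisolve; symmetry; apply: trisolve_unique => [k|k].
  by rewrite subnn genD_even // qfact0 divr1 pnatr_eq0.
exact: genocchi_coef_conv.
Qed.

Lemma lambda_U_qGenocchi n : (0 < n)%N ->
  L ((-1) ^+ n.-1 *: U 1 q (2 * n).-1) = qpochneg q (2 * n).-1 * qGenocchi q n.
Proof.
case: n => // n _; rewrite /qGenocchi fps_div_genocchi_coef /genocchi_coef mul2n.
rewrite odd_double lambdaZ U_Uprev prednK ?double_gt0 //.
by field; rewrite qfact_neq0 qpochneg_neq0.
Qed.

Definition lambda_triangle (m k : nat) : R :=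
  (-1) ^+ m./2 * L ('X^(m./2.+1 - k) * Uprev (if odd m then k.*2 else k.*2.-1)).

Lemma lambda_triangle_odd n k :
  lambda_triangle (2 * n).+1 k = (-1) ^+ n * L ('X^(n.+1 - k) * Uprev k.*2).
Proof. by rewrite /lambda_triangle mul2n /= odd_double uphalf_double. Qed.

Lemma lambda_triangle_even n k :
  lambda_triangle (2 * n) k = (-1) ^+ n * L ('X^(n.+1 - k) * Uprev k.*2.-1).
Proof. by rewrite /lambda_triangle mul2n odd_double half_double. Qed.

Lemma lambda_triangle_odd_rec n k : (1 <= k <= n.+1)%N ->
  lambda_triangle (2 * n).+1 k = q ^+ (2 * k - 2) * lambda_triangle (2 * n).+1 k.-1
                                 + (1 + q ^+ (2 * k - 1)) * lambda_triangle (2 * n) k.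
Proof.
case: k => // k /andP [_ le_kn]; rewrite !lambda_triangle_odd lambda_triangle_even.
rewrite doubleS UprevSS mulrDr -!scalerAr mulrA -exprSr lambdaD !lambdaZ -pred_Sn.
have -> : (n.+1 - k = (n.+1 - k.+1).+1)%N by lia.
have -> : (2 * k.+1 - 2 = k.*2)%N by lia.
have -> : (2 * k.+1 - 1 = k.*2.+1)%N by lia.
by ring.
Qed.

Lemma lambda_triangle_even_rec n k : (1 <= n)%N -> (1 <= k <= n)%N ->
  lambda_triangle (2 * n) k = q ^ (1 - (2 * k)%N%:Z)
    * (lambda_triangle (2 * n) k.+1 + (1 + q ^+ (2 * k)) * lambda_triangle (2 * n).-1 k).
Proof.
case: n => // n _; case: k => // k /andP [_ le_kn].
have -> : (2 * n.+1).-1 = (2 * n).+1 by lia.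
rewrite !lambda_triangle_even lambda_triangle_odd /= -mul2n.
have -> : (1 - (2 * k.+1)%N%:Z)%R = - (2 * k).+1%:Z by lia.
rewrite -exprnN mul2n !doubleS /= UprevSS.
have -> : (n.+2 - k.+1 = (n.+1 - k.+1).+1)%N by lia.
have -> : (n.+2 - k.+2 = n.+1 - k.+1)%N by lia.
rewrite ['X^_ * (_ + _)]mulrDr -!scalerAr mulrA -exprSr lambdaD !lambdaZ exprS.
set U1 := L (_ * Uprev k.*2.+1); set U2 := L (_ * Uprev k.*2.+2).
by rewrite mul2n doubleS; field; rewrite expf_neq0.
Qed.

Lemma lambda_genocchi_triangle : genocchi_triangle q lambda_triangle.
Proof.
split.
- by rewrite /lambda_triangle /= mul1r expr0 mul1r -(U_Uprev 0) (hL.2 0).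
- by move=> n; rewrite lambda_triangle_odd Uprev0 mulr0 lambda0 mulr0.
- move=> n n_gt0; rewrite lambda_triangle_even subnn expr0 mul1r.
  by rewrite lambda_Uprev_odd eqn0Ngt n_gt0 mulr0.
- exact: lambda_triangle_odd_rec.
- exact: lambda_triangle_even_rec.
Qed.

End Lambda.

End QGenocchi.

Theorem theorem3p6 (R : realFieldType) (q : R) (b : nat -> nat -> R) :
  q != 0 -> q != -1 ->
  b 0%N 1%N = 1 ->
  (forall n : nat, b (2 * n).+1 0%N = 0) ->
  (forall n : nat, (1 <= n)%N -> b (2 * n)%N n.+1 = 0) ->
  (forall n k : nat, (1 <= k <= n.+1)%N ->
     b (2 * n).+1 k = q ^+ (2 * k - 2) * b (2 * n).+1 k.-1
                      + (1 + q ^+ (2 * k - 1)) * b (2 * n)%N k) ->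
  (forall n k : nat, (1 <= n)%N -> (1 <= k <= n)%N ->
     b (2 * n)%N k = q ^ (1 - (2 * k)%N%:Z)
                     * (b (2 * n)%N k.+1 + (1 + q ^+ (2 * k)) * b (2 * n).-1 k)) ->
  (exists L : {poly R} -> R, lambda_spec q L) /\
  (forall L : {poly R} -> R, lambda_spec q L ->
     forall n : nat, (1 <= n)%N ->
       b (2 * n).-1 n = L ((-1) ^+ n.-1 *: U 1 q (2 * n).-1) /\
       L ((-1) ^+ n.-1 *: U 1 q (2 * n).-1)
         = qpochneg q (2 * n).-1 * qGenocchi q n).
Proof.
move=> q0 qN1 b01 b0 b_top b_odd b_even.
have b_triangle : genocchi_triangle q b by split.
split=> [|L hL n n_gt0]; first by exists (lambda_fun q); exact: lambda_fun_spec.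
split; last exact: lambda_U_qGenocchi.
case: n n_gt0 => // n _; rewrite mulnS add2n /=.
rewrite (genocchi_triangle_unique b_triangle (lambda_genocchi_triangle qN1 q0 hL)) //.
by rewrite lambda_triangle_odd subnn expr0 mul1r (lambdaZ hL) (U_Uprev qN1) mul2n.
Qed.
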